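(* Let $T_1,T_2$ be tables joined on column $J$ with frequencies $a_v,b_v$ ($v\in\mathcal U$) such that $\gamma_{1,1}=\sum_v a_vb_v>0$, and let $\epsilon_1,\epsilon_2\in(0,1]$. Among all UBS parameters $(p_1,q_1),(p_2,q_2)\in(0,1]^2$ with $p_1q_1=\epsilon_1$ and $p_2q_2=\epsilon_2$, the variance of $\hat J_{\mathrm{count}}=\frac{1}{\min\{p_1,p_2\}q_1q_2}|S_1\bowtie_J S_2|$ (with $S_i=\mathrm{UBS}_{p_i,q_i}(T_i,J)$) is minimized by $$p_1=p_2=p:=\min\Big\{1,\max\Big\{\epsilon_1,\epsilon_2,\sqrt{\frac{\epsilon_1\epsilon_2(\gamma_{2,2}-\gamma_{1,2}-\gamma_{2,1}+\gamma_{1,1})}{\gamma_{1,1}}}\Big\}\Big\},\qquad q_1=\epsilon_1/p,\ q_2=\epsilon_2/p,$$ where $\gamma_{i,j}=\sum_{v\in\mathcal U}a_v^ib_v^j$.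
   Context: $T_1,T_2$ are finite multisets of tuples with a join attribute $J$ taking values in a finite set $\mathcal U$; $a_v$ (resp. $b_v$) is the number of tuples of $T_1$ (resp. $T_2$) with $J$-value $v$. $S_1\bowtie_J S_2$ is the set of pairs $(t_1,t_2)\in S_1\times S_2$ with $t_1.J=t_2.J$. $\mathrm{UBS}_{p,q}(T,J)$: given a hash function $h:\mathcal U\to[0,1]$, each tuple $t\in T$ with $h(t.J)<p$ is included independently with probability $q$; others are excluded. The values $h(v)$ are independent uniform on $[0,1]$, the same $h$ is used for both tables, and the Bernoulli coins are independent across all tuples and independent of $h$. *)

From HB Require Import structures.
From mathcomp Require Import all_boot all_order all_algebra.
From mathcomp Require Import all_classical all_reals all_analysis.
Unset Printing Implicit Defensive.
Import Order.TTheory GRing.Theory Num.Theory.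
Local Open Scope ring_scope.

(* The join-value universe U is modelled as 'I_n.  A table T with
   frequencies a : 'I_n -> nat is modelled by its tuples, indexed by
   pairs (v, i) with i < a v; the J-value of tuple (v,i) is v. *)
Definition tuples {n : nat} (a : 'I_n -> nat) : finType := {v : 'I_n & 'I_(a v)}.

Definition bweight {R : realType} (T : finType) (q : R) (c : {ffun T -> bool}) : R :=
  \prod_(t : T) (if c t then q else 1 - q).

Definition coinE {R : realType} (T : finType) (q : R) (F : {ffun T -> bool} -> R) : R :=
  \sum_(c : {ffun T -> bool}) bweight T q c * F c.

(* Expectation over a hash h with h(0),...,h(n-1) i.i.d. uniform on [0,1]
   (iterated Lebesgue integral over [0,1]^n). *)
Fixpoint hashE {R : realType} (n : nat) (F : (nat -> R) -> R) : R :=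
  match n with
  | 0 => F (fun _ => 0)
  | m.+1 => Rintegral (@lebesgue_measure R) `[0%R, 1%R]%classic
              (fun x => hashE m (fun h => F (fun k => if k == m then x else h k)))
  end.

Definition ubs {R : realType} {n : nat} (a : 'I_n -> nat) (p : R) (h : nat -> R)
  (c : {ffun tuples a -> bool}) : {set tuples a} :=
  [set t | (h (val (tag t)) < p) && c t].

Definition joinsize {n : nat} (a b : 'I_n -> nat)
  (S1 : {set tuples a}) (S2 : {set tuples b}) : nat :=
  #|[set tt : tuples a * tuples b |
      [&& tt.1 \in S1, tt.2 \in S2 & tag tt.1 == tag tt.2]]|.

Definition Jcount {R : realType} {n : nat} (a b : 'I_n -> nat) (p1 q1 p2 q2 : R)
  (h : nat -> R) (c1 : {ffun tuples a -> bool}) (c2 : {ffun tuples b -> bool}) : R :=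
  (joinsize a b (ubs a p1 h c1) (ubs b p2 h c2))%:R / (Num.min p1 p2 * q1 * q2).

Definition ubsE {R : realType} {n : nat} (a b : 'I_n -> nat) (q1 q2 : R)
  (G : (nat -> R) -> {ffun tuples a -> bool} -> {ffun tuples b -> bool} -> R) : R :=
  hashE n (fun h => coinE (tuples a) q1 (fun c1 => coinE (tuples b) q2 (fun c2 => G h c1 c2))).

Definition var_Jcount {R : realType} {n : nat} (a b : 'I_n -> nat) (p1 q1 p2 q2 : R) : R :=
  ubsE a b q1 q2 (fun h c1 c2 => (Jcount a b p1 q1 p2 q2 h c1 c2) ^+ 2)
  - (ubsE a b q1 q2 (fun h c1 c2 => Jcount a b p1 q1 p2 q2 h c1 c2)) ^+ 2.

Definition gamma {R : realType} {n : nat} (a b : 'I_n -> nat) (i j : nat) : R :=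
  \sum_(v < n) ((a v)%:R ^+ i * (b v)%:R ^+ j).

Definition popt {R : realType} {n : nat} (a b : 'I_n -> nat) (e1 e2 : R) : R :=
  Num.min 1 (Num.max e1 (Num.max e2
    (Num.sqrt (e1 * e2 * (gamma a b 2 2 - gamma a b 1 2 - gamma a b 2 1
                          + gamma a b 1 1) / gamma a b 1 1)))).

From HB Require Import structures.
From mathcomp Require Import all_boot all_order all_algebra.
From mathcomp Require Import all_classical all_reals all_analysis.
From mathcomp Require Import measurable_realfun ring lra.
Import Order.TTheory GRing.Theory Num.Theory.
Local Open Scope ring_scope.

(* The join size is |S1 join S2| = sum_v [h(v) < min(p1,p2)] X_v Y_v, where X_v
   and Y_v count the kept tuples of J-value v in T1 and T2.  The hash values
   and the two coin families are independent, and each of the three factors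
   has second moment E[Z_v Z_w] = z_v z_w r^2 + [v = w] z_v (r - r^2) for the
   appropriate count z and rate r.  Summing gives
     Var = N(1/q1, 1/q2) / min(p1,p2) - gamma_22,
     N(x1,x2) = sum_v a_v b_v (a_v - 1 + x1) (b_v - 1 + x2),
   and N is bilinear with non-negative coefficients C, B1, B2, gamma_11.
   With q_i = eps_i / p_i, replacing p1 and p2 by the common value
   y = max(min(p1,p2), eps1, eps2) does not increase the variance, and on the
   diagonal the variance is C/y + D y + const with D = gamma_11/(eps1 eps2),
   a convex function minimized over [max(eps1,eps2), 1] by sqrt(C/D) clamped
   to that interval, which is popt. *)

Section BernoulliVector.
Variable R : realType.
Implicit Types (p : R) (g : (nat -> bool) -> R).

(* The coordinates >= n are never randomized; fixing them to [0 < p] matches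
   [hashE], which evaluates the unused hash values at 0. *)
Fixpoint bernoulliE p n g : R :=
  if n is m.+1 then
    p * bernoulliE p m (fun t => g (fun k => if k == m then true else t k))
    + (1 - p) * bernoulliE p m (fun t => g (fun k => if k == m then false else t k))
  else g (fun _ => 0 < p).

Lemma eq_bernoulliE p n g1 g2 : g1 =1 g2 -> bernoulliE p n g1 = bernoulliE p n g2.
Proof.
elim: n g1 g2 => [|n IH] g1 g2 e /=; first exact: e.
by congr (_ * _ + _ * _); apply: IH => t; exact: e.
Qed.

Lemma bernoulliE_cst p n c : bernoulliE p n (fun _ => c) = c.
Proof. by elim: n => [|n IH] //=; rewrite !IH; ring. Qed.

Lemma bernoulliE_sum (I : Type) (r : seq I) (P : pred I) p n
    (F : I -> (nat -> bool) -> R) :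
  bernoulliE p n (fun t => \sum_(i <- r | P i) F i t) =
  \sum_(i <- r | P i) bernoulliE p n (F i).
Proof.
elim: n F => [|n IH] F //=.
rewrite (IH (fun i t => F i (fun j => if j == n then true else t j))).
rewrite (IH (fun i t => F i (fun j => if j == n then false else t j))).
by rewrite !mulr_sumr -big_split.
Qed.

Lemma bernoulliE_scale p n k g :
  bernoulliE p n (fun t => k * g t) = k * bernoulliE p n g.
Proof.
elim: n g => [|n IH] g //=.
by rewrite (IH (fun t => g (fun j => if j == n then true else t j))) IH; ring.
Qed.

Lemma bernoulliE_ind p n k : (k < n)%N -> bernoulliE p n (fun t => (t k)%:R) = p.
Proof.
elim: n => [//|n IH] kn /=.
have [_|ne] /= := eqVneq k n; first by rewrite !bernoulliE_cst /=; ring.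
by rewrite IH; [ring | rewrite ltn_neqAle ne -ltnS].
Qed.

Lemma bernoulliE_ind2 p n k j : (k < n)%N -> (j < n)%N ->
  bernoulliE p n (fun t => (t k)%:R * (t j)%:R) = p ^+ 2 + (k == j)%:R * (p - p ^+ 2).
Proof.
elim: n => [//|n IH] kn jn /=.
have ltS i : (i < n.+1)%N -> i != n -> (i < n)%N.
  by move=> i_lt i_ne; rewrite ltn_neqAle i_ne -ltnS.
have [-> {kn}|nk] := eqVneq k n; have [ej|nj] /= := eqVneq j n.
- by rewrite !bernoulliE_cst /=; ring.
- under eq_bernoulliE => t do rewrite mul1r.
  under [X in (1 - p) * X]eq_bernoulliE => t do rewrite mul0r.
  by rewrite bernoulliE_cst bernoulliE_ind ?ltS //; ring.
- under eq_bernoulliE => t do rewrite mulr1.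
  under [X in (1 - p) * X]eq_bernoulliE => t do rewrite mulr0.
  by rewrite bernoulliE_cst bernoulliE_ind ?ltS // ej (negbTE nk) /=; ring.
- by rewrite IH ?ltS //; ring.
Qed.

Lemma Rintegral01_step p (A B : R) : 0 <= p <= 1 ->
  Rintegral (@lebesgue_measure R) `[0%R, 1%R]%classic (fun x => if x < p then A else B)
  = p * A + (1 - p) * B.
Proof.
move=> /andP[p0 p1].
have mf : measurable_fun setT (fun x : R => if x < p then A else B).
  by apply: measurable_fun_ifT => //; exact: measurable_fun_ltr.
rewrite /Rintegral (@itv_bndbnd_setU _ _ _ (BLeft p)) ?bnd_simp //.
rewrite integral_setU //=; last 2 first.
- by apply/measurable_EFinP; exact: measurable_funS mf.
- apply/disj_setPS => x [] /=; rewrite !in_itv /= => /andP[_ h1] /andP[h2 _].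
  by move: h1; rewrite ltNge h2.
rewrite (eq_integral (cst A%:E)); last first.
  by move=> x; rewrite inE /= in_itv /= => /andP[_ ->].
rewrite [X in (_ + X)%E](eq_integral (cst B%:E)); last first.
  by move=> x; rewrite inE /= in_itv /= => /andP[h _]; rewrite ltNge h.
rewrite !integral_cst //= !lebesgue_measure_itv /= !lte_fin.
have [p_gt0|p_le0] := ltP 0 p; have [p_lt1|p_ge1] := ltP p 1 => /=.
- by ring.
- by rewrite (_ : p = 1); [ring | lra].
- by rewrite (_ : p = 0); [ring | lra].
- lra.
Qed.

Lemma hashE_bernoulliE p n g : 0 <= p <= 1 ->
  hashE n (fun h => g (fun k => h k < p)) = bernoulliE p n g.
Proof.
move=> hp; elim: n g => [|n IH] g //=.
rewrite -Rintegral01_step //; congr Rintegral; apply: funext => x.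
transitivity (bernoulliE p n (fun t => g (fun k => if k == n then x < p else t k))).
  rewrite -IH; congr hashE; apply: funext => h; congr g; apply: funext => k.
  by case: (k == n).
by case: (x < p).
Qed.

Lemma hashE_lt_sum n p (K : 'I_n -> R) : 0 <= p <= 1 ->
  hashE n (fun h => \sum_v K v * (h (val v) < p)%R%:R) = \sum_v K v * p.
Proof.
move=> hp; have := hashE_bernoulliE p n (fun t => \sum_v K v * (t (val v))%:R) hp.
move=> /= ->; rewrite bernoulliE_sum; apply: eq_bigr => v _.
by rewrite bernoulliE_scale bernoulliE_ind.
Qed.

Lemma hashE_lt_sum2 n p (K : 'I_n -> 'I_n -> R) : 0 <= p <= 1 ->
  hashE n (fun h =>
    \sum_v \sum_w K v w * ((h (val v) < p)%R%:R * (h (val w) < p)%R%:R)) =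
  \sum_v \sum_w K v w * (p ^+ 2 + (v == w)%:R * (p - p ^+ 2)).
Proof.
move=> hp; have := hashE_bernoulliE p n
  (fun t => \sum_v \sum_w K v w * ((t (val v))%:R * (t (val w))%:R)) hp.
move=> /= ->; rewrite bernoulliE_sum; apply: eq_bigr => v _.
rewrite bernoulliE_sum; apply: eq_bigr => w _.
by rewrite bernoulliE_scale bernoulliE_ind2.
Qed.

End BernoulliVector.

Section Coins.
Variables (R : realType) (T : finType) (q : R).

Lemma coinE_prod (f : T -> bool -> R) :
  coinE T q (fun c => \prod_t f t (c t)) = \prod_t (q * f t true + (1 - q) * f t false).
Proof.
rewrite /coinE /bweight.
transitivity (\sum_(c : {ffun T -> bool}) \prod_t ((if c t then q else 1 - q) * f t (c t))).
  by apply: eq_bigr => c _; rewrite big_split.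
transitivity (\prod_t \sum_(b : bool) ((if b then q else 1 - q) * f t b)).
  by rewrite bigA_distr_bigA.
by apply: eq_bigr => t _; rewrite big_bool.
Qed.

Lemma coinE_sum (I : Type) (r : seq I) (P : pred I) (F : I -> {ffun T -> bool} -> R) :
  coinE T q (fun c => \sum_(i <- r | P i) F i c) = \sum_(i <- r | P i) coinE T q (F i).
Proof.
by rewrite /coinE; under eq_bigr do rewrite mulr_sumr; rewrite exchange_big.
Qed.

Lemma eq_coinE (F G : {ffun T -> bool} -> R) : F =1 G -> coinE T q F = coinE T q G.
Proof. by move=> FG; congr coinE; apply: funext. Qed.

Lemma coinE_scale k (F : {ffun T -> bool} -> R) :
  coinE T q (fun c => k * F c) = k * coinE T q F.
Proof. by rewrite /coinE mulr_sumr; apply: eq_bigr => c _; rewrite mulrCA. Qed.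

Lemma coinE_ind x : coinE T q (fun c => (c x)%:R) = q.
Proof.
transitivity (coinE T q (fun c => \prod_t (if t == x then (c t)%:R else 1))).
  by congr coinE; apply: funext => c; rewrite -big_mkcond big_pred1_eq.
rewrite (coinE_prod (fun t b => if t == x then b%:R else 1)).
transitivity (\prod_t (if t == x then q else 1)); last by rewrite -big_mkcond big_pred1_eq.
by apply: eq_bigr => t _; case: (t == x) => /=; ring.
Qed.

Lemma coinE_ind2 x y :
  coinE T q (fun c => (c x)%:R * (c y)%:R) = q ^+ 2 + (x == y)%:R * (q - q ^+ 2).
Proof.
pose ind (z t : T) (b : bool) : R := if t == z then b%:R else 1.
transitivity (coinE T q (fun c => \prod_t (ind x t (c t) * ind y t (c t)))).
  congr coinE; apply: funext => c.
  by rewrite big_split /= -!big_mkcond !big_pred1_eq.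
rewrite (coinE_prod (fun t b => ind x t b * ind y t b)) /ind.
have [<-|xy] := eqVneq x y.
  transitivity (\prod_t (if t == x then q else 1)).
    by apply: eq_bigr => t _; case: (t == x) => /=; ring.
  by rewrite -big_mkcond big_pred1_eq /=; ring.
transitivity (\prod_t ((if t == x then q else 1) * (if t == y then q else 1))).
  apply: eq_bigr => t _.
  have [->|tx] := eqVneq t x; first by rewrite (negbTE xy) /=; ring.
  by case: (t == y) => /=; ring.
by rewrite big_split /= -!big_mkcond !big_pred1_eq /=; ring.
Qed.

End Coins.
Arguments eq_coinE {R T q F G}.

Section KeptTuples.
Variables (R : realType) (n : nat) (c : 'I_n -> nat).

Definition nkept (s : {ffun tuples c -> bool}) (v : 'I_n) : R :=
  \sum_(x : tuples c | tag x == v) (s x)%:R.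

Lemma sum_tag_eq_cst v (k : R) : \sum_(x : tuples c | tag x == v) k = (c v)%:R * k.
Proof.
rewrite sumr_const mulr_natl; congr (_ *+ _).
have := @sig_big_dep _ 0%N addn _ (fun v => 'I_(c v)) (pred1 v)
  (fun _ _ => true) (fun _ _ => 1%N).
rewrite big_pred1_eq sum1_card card_ord => ->.
by rewrite -sum1_card; apply: eq_bigl => x; rewrite andbT.
Qed.

Lemma coinE_nkept q v : coinE (tuples c) q (fun s => nkept s v) = (c v)%:R * q.
Proof.
rewrite /nkept coinE_sum.
by under eq_bigr do rewrite coinE_ind; rewrite sum_tag_eq_cst.
Qed.

Definition nkept_moment2 (q : R) (v w : 'I_n) : R :=
  (c v)%:R * (c w)%:R * q ^+ 2 + (v == w)%:R * ((c v)%:R * (q - q ^+ 2)).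

Lemma coinE_nkept2 q v w :
  coinE (tuples c) q (fun s => nkept s v * nkept s w) = nkept_moment2 q v w.
Proof.
transitivity (coinE (tuples c) q (fun s => \sum_(x : tuples c | tag x == v)
    \sum_(y : tuples c | tag y == w) (s x)%:R * (s y)%:R)).
  by congr coinE; apply: funext => s; rewrite /nkept big_distrlr.
rewrite coinE_sum; under eq_bigr do rewrite coinE_sum.
under eq_bigr => x _ do under eq_bigr => y _ do rewrite coinE_ind2.
under eq_bigr => x _ do rewrite big_split /= sum_tag_eq_cst.
rewrite big_split /= sum_tag_eq_cst mulrA /nkept_moment2; congr (_ + _).
transitivity (\sum_(x : tuples c | tag x == v) (v == w)%:R * (q - q ^+ 2)).
  apply: eq_bigr => x /eqP <-.
  rewrite -big_distrl /=; congr (_ * _).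
  rewrite big_mkcond (bigD1 x) //= eqxx big1 => [|y yx].
    by rewrite addr0; case: (tag x == w).
  by case: ifP => _ //; rewrite eq_sym (negbTE yx).
by rewrite sum_tag_eq_cst mulrCA.
Qed.

End KeptTuples.
Arguments nkept {R n c} s v.
Arguments nkept_moment2 {R n} c q v w.

Lemma sum_offdiag (V : zmodType) (I : finType) (X F : I -> I -> V) :
  (forall i j, i != j -> X i j = F i j) ->
  \sum_i \sum_j X i j = \sum_i \sum_j F i j + \sum_i (X i i - F i i).
Proof.
move=> XF; rewrite -big_split /=; apply: eq_bigr => i _.
rewrite (bigD1 i) // [in RHS](bigD1 i) //=.
rewrite (eq_bigr (F i)) => [|j ji]; last by rewrite XF // eq_sym.
by rewrite [RHS]addrAC [F i i + _]addrC subrK.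
Qed.

Section Estimator.
Variables (R : realType) (n : nat) (a b : 'I_n -> nat).

Lemma joinsize_ubs (p1 p2 : R) h c1 c2 :
  (joinsize a b (ubs a p1 h c1) (ubs b p2 h c2))%:R =
  \sum_v (h (val v) < Num.min p1 p2)%R%:R * (nkept c1 v * nkept c2 v) :> R.
Proof.
rewrite /joinsize -sum1_card natr_sum big_mkcond /=.
set S := [set tt | _].
transitivity (\sum_(x : tuples a) \sum_(y : tuples b) ((x, y) \in S)%:R : R).
  by rewrite pair_bigA; apply: eq_bigr => -[x y] _; case: ((x, y) \in S).
rewrite (partition_big (fun x : tuples a => tag x) predT) //=.
apply: eq_bigr => v _; rewrite /nkept big_distrlr mulr_sumr.
apply: eq_bigr => x /eqP tx; rewrite mulr_sumr big_mkcond [RHS]big_mkcond /=.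
apply: eq_bigr => y _; rewrite /S !inE /= tx eq_sym lt_min.
have [ty|_] := eqVneq (tag y) v; last by rewrite !andbF.
rewrite ty.
by case: (h _ < p1); case: (h _ < p2); case: (c1 x); case: (c2 y) => /=; ring.
Qed.

Lemma Jcount_sum (p1 q1 p2 q2 : R) h c1 c2 :
  Jcount a b p1 q1 p2 q2 h c1 c2 =
  \sum_v ((h (val v) < Num.min p1 p2)%R%:R / (Num.min p1 p2 * q1 * q2) * nkept c1 v)
          * nkept c2 v.
Proof. by rewrite /Jcount joinsize_ubs mulr_suml; apply: eq_bigr => v _; ring. Qed.

Lemma Jcount_sqr_sum (p1 q1 p2 q2 : R) h c1 c2 :
  Jcount a b p1 q1 p2 q2 h c1 c2 ^+ 2 =
  \sum_v \sum_w ((h (val v) < Num.min p1 p2)%R%:R * (h (val w) < Num.min p1 p2)%R%:R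
                   / (Num.min p1 p2 * q1 * q2) ^+ 2 * (nkept c1 v * nkept c1 w))
                 * (nkept c2 v * nkept c2 w).
Proof.
rewrite Jcount_sum expr2 big_distrlr; apply: eq_bigr => v _.
by apply: eq_bigr => w _ /=; rewrite -exprVn; ring.
Qed.

Lemma coinE_Jcount (p1 q1 p2 q2 : R) h :
  coinE (tuples a) q1 (fun c1 => coinE (tuples b) q2 (Jcount a b p1 q1 p2 q2 h c1)) =
  \sum_v ((a v)%:R * (b v)%:R * q1 * q2 / (Num.min p1 p2 * q1 * q2))
          * (h (val v) < Num.min p1 p2)%R%:R.
Proof.
transitivity (coinE (tuples a) q1 (fun c1 => \sum_v
  ((h (val v) < Num.min p1 p2)%R%:R / (Num.min p1 p2 * q1 * q2) * ((b v)%:R * q2))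
  * nkept c1 v)).
  apply: eq_coinE => c1; rewrite (eq_coinE (Jcount_sum p1 q1 p2 q2 h c1)) coinE_sum.
  by apply: eq_bigr => v _; rewrite coinE_scale coinE_nkept; ring.
by rewrite coinE_sum; apply: eq_bigr => v _; rewrite coinE_scale coinE_nkept; ring.
Qed.

Lemma ubsE_Jcount (p1 q1 p2 q2 : R) : 0 < Num.min p1 p2 <= 1 -> q1 != 0 -> q2 != 0 ->
  ubsE a b q1 q2 (fun h c1 c2 => Jcount a b p1 q1 p2 q2 h c1 c2) = gamma a b 1 1.
Proof.
move=> /andP[m_gt0 m_le1] q1_neq0 q2_neq0.
rewrite /ubsE (_ : (fun h => _) = fun h => \sum_v
  ((a v)%:R * (b v)%:R * q1 * q2 / (Num.min p1 p2 * q1 * q2))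
  * (h (val v) < Num.min p1 p2)%R%:R); last by apply: funext => h; rewrite coinE_Jcount.
rewrite hashE_lt_sum ?m_le1 ?ltW //; apply: eq_bigr => v _.
by field; rewrite q1_neq0 q2_neq0 gt_eqF.
Qed.

Lemma coinE_Jcount_sqr (p1 q1 p2 q2 : R) h :
  coinE (tuples a) q1 (fun c1 => coinE (tuples b) q2 (fun c2 =>
    Jcount a b p1 q1 p2 q2 h c1 c2 ^+ 2)) =
  \sum_v \sum_w (nkept_moment2 a q1 v w * nkept_moment2 b q2 v w
                   / (Num.min p1 p2 * q1 * q2) ^+ 2)
    * ((h (val v) < Num.min p1 p2)%R%:R * (h (val w) < Num.min p1 p2)%R%:R).
Proof.
transitivity (coinE (tuples a) q1 (fun c1 => \sum_v \sum_w
  ((h (val v) < Num.min p1 p2)%R%:R * (h (val w) < Num.min p1 p2)%R%:R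
   / (Num.min p1 p2 * q1 * q2) ^+ 2 * nkept_moment2 b q2 v w)
  * (nkept c1 v * nkept c1 w))).
  apply: eq_coinE => c1; rewrite (eq_coinE (Jcount_sqr_sum p1 q1 p2 q2 h c1)).
  rewrite coinE_sum; apply: eq_bigr => v _; rewrite coinE_sum; apply: eq_bigr => w _.
  by rewrite coinE_scale coinE_nkept2; ring.
rewrite coinE_sum; apply: eq_bigr => v _; rewrite coinE_sum; apply: eq_bigr => w _.
by rewrite coinE_scale coinE_nkept2; ring.
Qed.

Lemma ubsE_Jcount_sqr (p1 q1 p2 q2 : R) : 0 <= Num.min p1 p2 <= 1 ->
  ubsE a b q1 q2 (fun h c1 c2 => Jcount a b p1 q1 p2 q2 h c1 c2 ^+ 2) =
  \sum_v \sum_w (nkept_moment2 a q1 v w * nkept_moment2 b q2 v w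
                   / (Num.min p1 p2 * q1 * q2) ^+ 2)
    * (Num.min p1 p2 ^+ 2 + (v == w)%:R * (Num.min p1 p2 - Num.min p1 p2 ^+ 2)).
Proof.
move=> m01; rewrite /ubsE -hashE_lt_sum2 //.
by congr hashE; apply: funext => h; rewrite coinE_Jcount_sqr.
Qed.

Definition var_numerator (x1 x2 : R) : R :=
  \sum_v (a v)%:R * (b v)%:R * ((a v)%:R - 1 + x1) * ((b v)%:R - 1 + x2).

Lemma var_Jcount_closed (p1 q1 p2 q2 : R) :
  0 < p1 <= 1 -> 0 < p2 <= 1 -> 0 < q1 -> 0 < q2 ->
  var_Jcount a b p1 q1 p2 q2 =
  var_numerator q1^-1 q2^-1 / Num.min p1 p2 - gamma a b 2 2.
Proof.
move=> /andP[p1_gt0 p1_le1] /andP[p2_gt0 _] q1_gt0 q2_gt0.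
have m_gt0 : 0 < Num.min p1 p2 by rewrite lt_min p1_gt0.
have m_le1 : Num.min p1 p2 <= 1 by rewrite ge_min p1_le1.
have [m_neq0 q1_neq0 q2_neq0] := And3 (lt0r_neq0 m_gt0) (lt0r_neq0 q1_gt0) (lt0r_neq0 q2_gt0).
rewrite /var_Jcount ubsE_Jcount_sqr ?ubsE_Jcount ?m_gt0 ?m_le1 ?(ltW m_gt0) //.
rewrite (@sum_offdiag _ _ _ (fun v w => (a v)%:R * (b v)%:R * ((a w)%:R * (b w)%:R))).
  have -> : \sum_v \sum_w (a v)%:R * (b v)%:R * ((a w)%:R * (b w)%:R) =
            gamma a b 1 1 ^+ 2 :> R by rewrite expr2 big_distrlr.
  rewrite addrAC subrr add0r /var_numerator /gamma mulr_suml -sumrB.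
  apply: eq_bigr => v _ /=.
  by rewrite /nkept_moment2 eqxx /=; field; rewrite q1_neq0 q2_neq0 m_neq0.
move=> v w vw; rewrite /nkept_moment2 (negbTE vw) /=.
by field; rewrite q1_neq0 q2_neq0 m_neq0.
Qed.

End Estimator.
Arguments var_numerator {R n} a b x1 x2.

Section ScalarOptimization.
Variable R : rcfType.

Definition bilin (C B1 B2 G x1 x2 : R) : R := C + B1 * x1 + B2 * x2 + G * (x1 * x2).

Definition clamp (lo hi x : R) : R := Num.min hi (Num.max lo x).

Lemma clamp_ge lo hi x : lo <= hi -> lo <= clamp lo hi x.
Proof. by move=> lo_hi; rewrite le_min lo_hi le_max lexx. Qed.

Lemma clamp_le lo hi x : clamp lo hi x <= hi.
Proof. by rewrite ge_min lexx. Qed.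

Lemma clamped_minimizer_le (C D s lo hi y : R) :
  0 < D -> 0 <= s -> D * s ^+ 2 = C -> 0 < lo -> lo <= y <= hi ->
  C / clamp lo hi s + D * clamp lo hi s <= C / y + D * y.
Proof.
move=> D_gt0 s_ge0 DsC lo_gt0 /andP[lo_y y_hi]; set P := clamp lo hi s.
have lo_P : lo <= P by rewrite clamp_ge // (le_trans lo_y y_hi).
have P_gt0 : 0 < P := lt_le_trans lo_gt0 lo_P.
have y_gt0 : 0 < y := lt_le_trans lo_gt0 lo_y.
rewrite -subr_ge0 (_ : _ - _ = (y - P) * (D * (y * P) - C) / (y * P)); last first.
  by field; rewrite !gt_eqF.
apply: divr_ge0; last by rewrite mulr_ge0 // ltW.
rewrite -DsC; have [P_le_y|y_lt_P] := leP P y.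
- have [P_hi|s_le_P] : P = hi \/ s <= P.
    have [s_le_hi|hi_lt_s] := leP s hi; [right | left].
      by rewrite le_min s_le_hi le_max lexx orbT.
    by rewrite /P /clamp min_l // le_max (ltW hi_lt_s) orbT.
  + by rewrite (_ : y - P = 0) ?mul0r //; move: (clamp_le lo hi s); rewrite -/P; lra.
  rewrite mulr_ge0 ?subr_ge0 // ler_wpM2l ?(ltW D_gt0) // expr2.
  by rewrite ler_pM // (le_trans s_le_P).
- have P_le_s : P <= s.
    have : P <= Num.max lo s by rewrite ge_min lexx orbT.
    by rewrite le_max => /orP[P_lo|//]; lra.
  rewrite mulr_le0 ?subr_le0 ?(ltW y_lt_P) // ler_wpM2l ?(ltW D_gt0) // expr2.
  by rewrite ler_pM ?(ltW y_gt0) ?(ltW P_gt0) // (le_trans (ltW y_lt_P)).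
Qed.

Lemma bilinear_ratio_ge (C B1 B2 G e1 e2 p1 p2 : R) :
  0 <= C -> 0 <= B1 -> 0 <= B2 -> 0 <= G -> 0 < e1 <= p1 -> 0 < e2 <= p2 ->
  C / Num.max (Num.min p1 p2) (Num.max e1 e2) + B1 / e1 + B2 / e2
    + G / (e1 * e2) * Num.max (Num.min p1 p2) (Num.max e1 e2) <=
  bilin C B1 B2 G (p1 / e1) (p2 / e2) / Num.min p1 p2.
Proof.
move=> C_ge0 B1_ge0 B2_ge0 G_ge0 /andP[e1_gt0 e1_le] /andP[e2_gt0 e2_le].
set m := Num.min p1 p2; set y := Num.max m _.
have m_p1 : m <= p1 by rewrite ge_min lexx.
have m_p2 : m <= p2 by rewrite ge_min lexx orbT.
have m_gt0 : 0 < m by rewrite lt_min (lt_le_trans e1_gt0) // (lt_le_trans e2_gt0).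
have m_y : m <= y by rewrite le_max lexx.
have y_gt0 : 0 < y := lt_le_trans m_gt0 m_y.
rewrite (_ : _ / m = C / m + B1 / e1 * (p1 / m) + B2 / e2 * (p2 / m)
                     + G / (e1 * e2) * (p1 * p2 / m)); last first.
  by rewrite /bilin; field; rewrite !gt_eqF.
have p_div_m_ge1 p : m <= p -> 1 <= p / m by move=> m_p; rewrite ler_pdivlMr // mul1r.
rewrite !lerD //.
- by rewrite ler_wpM2l // lef_pV2 ?posrE.
- by rewrite -[X in X <= _]mulr1 ler_wpM2l ?divr_ge0 ?(ltW e1_gt0) ?p_div_m_ge1.
- by rewrite -[X in X <= _]mulr1 ler_wpM2l ?divr_ge0 ?(ltW e2_gt0) ?p_div_m_ge1.
rewrite ler_wpM2l ?divr_ge0 ?mulr_ge0 ?(ltW e1_gt0) ?(ltW e2_gt0) //.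
rewrite /y !ge_max !ler_pdivlMr //; apply/and3P; split.
- by rewrite ler_pM ?(ltW m_gt0).
- by rewrite ler_pM ?(ltW e1_gt0) ?(ltW m_gt0).
- by rewrite mulrC ler_pM ?(ltW e2_gt0) ?(ltW m_gt0).
Qed.

Lemma bilinear_ratio_min (C B1 B2 G e1 e2 p1 p2 P : R) :
  0 <= C -> 0 <= B1 -> 0 <= B2 -> 0 < G -> 0 < e1 <= p1 -> 0 < e2 <= p2 ->
  p1 <= 1 -> p2 <= 1 -> P = clamp (Num.max e1 e2) 1 (Num.sqrt (e1 * e2 * C / G)) ->
  bilin C B1 B2 G (P / e1) (P / e2) / P <=
  bilin C B1 B2 G (p1 / e1) (p2 / e2) / Num.min p1 p2.
Proof.
move=> C_ge0 B1_ge0 B2_ge0 G_gt0 e1_p1 e2_p2 p1_le1 p2_le1 {P}->.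
set P := clamp _ _ _.
have /andP[e1_gt0 e1_le1] : 0 < e1 <= 1 by rewrite (le_trans _ p1_le1) ?andbT; case/andP: e1_p1.
have /andP[e2_gt0 e2_le1] : 0 < e2 <= 1 by rewrite (le_trans _ p2_le1) ?andbT; case/andP: e2_p2.
have lo_gt0 : 0 < Num.max e1 e2 by rewrite lt_max e1_gt0.
have P_gt0 : 0 < P by rewrite (lt_le_trans lo_gt0) // clamp_ge // ge_max e1_le1.
have := bilinear_ratio_ge C B1 B2 G e1 e2 p1 p2 C_ge0 B1_ge0 B2_ge0 (ltW G_gt0)
  e1_p1 e2_p2.
apply: le_trans; set y := Num.max _ _; set D := G / (e1 * e2).
rewrite (_ : _ / P = C / P + D * P + (B1 / e1 + B2 / e2)); last first.
  by rewrite /bilin /D; field; rewrite !gt_eqF.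
rewrite (_ : _ + D * y = C / y + D * y + (B1 / e1 + B2 / e2)); last by ring.
rewrite lerD2r; apply: clamped_minimizer_le => //.
- by rewrite divr_gt0 // mulr_gt0.
- rewrite sqr_sqrtr ?divr_ge0 ?mulr_ge0 ?(ltW e1_gt0) ?(ltW e2_gt0) ?(ltW G_gt0) //.
  by rewrite /D; field; rewrite !gt_eqF.
- by rewrite le_max lexx orbT /= !ge_max ge_min p1_le1 e1_le1 e2_le1.
Qed.

End ScalarOptimization.
Arguments bilin {R} C B1 B2 G x1 x2.
Arguments clamp {R} lo hi x.

Lemma natr_mul_subr1_ge0 (R : numDomainType) (k : nat) : 0 <= (k%:R : R) * (k%:R - 1).
Proof.
by case: k => [|k]; rewrite ?mul0r // -natr1 addrK mulr_ge0 // addr_ge0.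
Qed.

Section Coefficients.
Variables (R : realType) (n : nat) (a b : 'I_n -> nat).

Lemma var_numerator_bilin (x1 x2 : R) :
  var_numerator a b x1 x2 =
  bilin (gamma a b 2 2 - gamma a b 1 2 - gamma a b 2 1 + gamma a b 1 1)
        (gamma a b 1 2 - gamma a b 1 1) (gamma a b 2 1 - gamma a b 1 1)
        (gamma a b 1 1) x1 x2.
Proof.
rewrite /var_numerator /bilin /gamma -!sumrB -!big_split /= !mulr_suml -!big_split /=.
by apply: eq_bigr => v _; ring.
Qed.

Lemma gamma_coefs_ge0 :
  [/\ 0 <= gamma (R:=R) a b 2 2 - gamma a b 1 2 - gamma a b 2 1 + gamma a b 1 1,
      0 <= gamma (R:=R) a b 1 2 - gamma a b 1 1 &
      0 <= gamma (R:=R) a b 2 1 - gamma a b 1 1].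
Proof.
rewrite /gamma -!sumrB -big_split /=; split; apply: sumr_ge0 => v _.
- rewrite (_ : _ + _ = (a v)%:R * ((a v)%:R - 1) * ((b v)%:R * ((b v)%:R - 1))); last by ring.
  by rewrite mulr_ge0 // natr_mul_subr1_ge0.
- rewrite (_ : _ - _ = (a v)%:R * ((b v)%:R * ((b v)%:R - 1))); last by ring.
  by rewrite mulr_ge0 // natr_mul_subr1_ge0.
- rewrite (_ : _ - _ = (b v)%:R * ((a v)%:R * ((a v)%:R - 1))); last by ring.
  by rewrite mulr_ge0 // natr_mul_subr1_ge0.
Qed.

Lemma popt_clamp (e1 e2 : R) :
  popt a b e1 e2 = clamp (Num.max e1 e2) 1 (Num.sqrt (e1 * e2 *
    (gamma a b 2 2 - gamma a b 1 2 - gamma a b 2 1 + gamma a b 1 1) / gamma a b 1 1)).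
Proof. by rewrite /popt maxA. Qed.

End Coefficients.

Theorem theorem5 (R : realType) (n : nat) (a b : 'I_n -> nat) (e1 e2 : R) :
  0 < gamma (R:=R) a b 1 1 ->
  0 < e1 <= 1 -> 0 < e2 <= 1 ->
  let p := popt a b e1 e2 in
  [/\ 0 < p <= 1, 0 < e1 / p <= 1, 0 < e2 / p <= 1 &
      forall p1 q1 p2 q2 : R,
        0 < p1 <= 1 -> 0 < q1 <= 1 -> 0 < p2 <= 1 -> 0 < q2 <= 1 ->
        p1 * q1 = e1 -> p2 * q2 = e2 ->
        var_Jcount a b p (e1 / p) p (e2 / p) <= var_Jcount a b p1 q1 p2 q2].
Proof.
move=> G_gt0 /andP[e1_gt0 e1_le1] /andP[e2_gt0 e2_le1] p.
have [lo_p p_le1] : Num.max e1 e2 <= p /\ p <= 1.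
  by rewrite /p popt_clamp clamp_le clamp_ge // ge_max e1_le1.
move: lo_p; rewrite ge_max => /andP[e1_p e2_p].
have p_gt0 : 0 < p := lt_le_trans e1_gt0 e1_p.
have rate_ok e : 0 < e -> e <= p -> 0 < e / p <= 1.
  by move=> e_gt0 e_p; rewrite divr_gt0 // ler_pdivrMr // mul1r.
have rate_inv (p' q' e : R) : 0 < p' -> p' * q' = e -> q'^-1 = p' / e.
  by move=> p'_gt0 <-; rewrite invfM mulrA divff ?mul1r ?gt_eqF.
split; rewrite ?p_gt0 ?rate_ok //.
move=> p1 q1 p2 q2 /andP[p1_gt0 p1_le1] /andP[q1_gt0 q1_le1] /andP[p2_gt0 p2_le1].
move=> /andP[q2_gt0 q2_le1] p1q1 p2q2.
have [C_ge0 B1_ge0 B2_ge0] := gamma_coefs_ge0 R n a b.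
rewrite !var_Jcount_closed ?p_gt0 ?p_le1 ?p1_gt0 ?p1_le1 ?p2_gt0 ?divr_gt0 //.
rewrite minxx lerD2r (rate_inv p1 q1 e1) // (rate_inv p2 q2 e2) // !invf_div.
rewrite !var_numerator_bilin; apply: bilinear_ratio_min => //; last exact: popt_clamp.
- by rewrite e1_gt0 -p1q1 ler_piMr ?(ltW p1_gt0).
- by rewrite e2_gt0 -p2q2 ler_piMr ?(ltW p2_gt0).
Qed.
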